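(* Let $k\le n$ and $\phi(k)<m<2n$. Then the value in $U_q^+(\mathfrak{sp}_{2n})$ of the bracketed word $[x_k\,x_{k+1}\cdots x_n\,y_m]$, where $y_m=v[n+1,m]=[x_{n+1},[x_{n+2},[\dots,[x_{m-1},x_m]\dots]]]$, does not depend on the arrangement of the (skew) brackets on the sequence $x_k,x_{k+1},\dots,x_n,y_m$.
   Context: Let $\mathbf{k}$ be a field, $G$ an abelian group, $n\ge2$, $X=\{x_1,\dots,x_n\}$, $g_i\in G$, characters $\chi^i:G\to\mathbf{k}^*$, $p_{ij}=\chi^i(g_j)$; for homogeneous $u,v$, $p(u,v)=\chi^u(g_v)$ (obtained by replacing $x_i$ by $g_i$, resp. $\chi^i$). $G\langle X\rangle$: skew group algebra with $x_ig=\chi^i(g)gx_i$; skew bracket $[u,v]=uv-p(u,v)vu$. Fix $q\in\mathbf{k}^*$, $q^3\ne1$, $q\ne-1$; assume $p_{ii}=q$ ($i<n$), $p_{nn}=q^2$, $p_{i,i-1}p_{i-1,i}=q^{-1}$ ($1<i<n$), $p_{n-1,n}p_{n,n-1}=q^{-2}$, $p_{ij}p_{ji}=1$ ($j>i+1$). $U_q^+(\mathfrak{sp}_{2n})$ is the quotient of $G\langle X\rangle$ by the ideal generated by $[x_i,[x_i,x_{i+1}]]$, $[[x_i,x_{i+1}],x_{i+1}]$ ($1\le i<n-1$), $[x_i,x_j]$ ($j>i+1$), $[[x_{n-1},x_n],x_n]$, $[x_{n-1},[x_{n-1},[x_{n-1},x_n]]]$. For $n<i<2n$, $x_i:=x_{2n-i}$;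 $\phi(i)=2n-i$. *)

From HB Require Import structures.
From mathcomp Require Import all_boot all_order all_algebra.
Set Implicit Arguments. Unset Strict Implicit. Unset Printing Implicit Defensive.
Import Order.TTheory GRing.Theory Num.Theory.
Local Open Scope ring_scope.

(* Binary trees (bracketings) with leaves labelled in A. *)
Inductive btree (A : Type) : Type :=
| BLeaf of A
| BNode of btree A & btree A.
Arguments BLeaf {A} _.
Arguments BNode {A} _ _.

Fixpoint frontier (A : Type) (t : btree A) : seq A :=
  match t with BLeaf a => [:: a] | BNode l r => frontier l ++ frontier r end.

Fixpoint bjoin (A : Type) (t : btree (btree A)) : btree A :=
  match t with BLeaf s => s | BNode l r => BNode (bjoin l) (bjoin r) end.

Fixpoint rcomb (a : nat) (s : seq nat) : btree nat :=
  match s with [::] => BLeaf a | b :: s' => BNode (BLeaf a) (rcomb b s') end.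

Section SkewAlgebra.
(* K : the field k; G : the abelian group, written additively (zmodType);
   generators x_1..x_n are indexed by the naturals 1..n;
   g i = g_i, chi i = chi^i. *)
Variables (K : fieldType) (G : zmodType) (n : nat).
Variables (g : nat -> G) (chi : nat -> G -> K).

Definition pp (i j : nat) : K := chi i (g j).

(* An element of G<X>: a formal finite sum of terms c * h * w,
   c : K, h : G, w a word in the letters 1..n. *)
Definition elt := seq (K * G * seq nat).

Definition chiw (w : seq nat) (h : G) : K := \prod_(i <- w) chi i h.
Definition gw (w : seq nat) : G := \sum_(i <- w) g i.

Definition eadd (a b : elt) : elt := a ++ b.
Definition escale (c : K) (a : elt) : elt :=
  [seq (c * t.1.1, t.1.2, t.2) | t <- a].
(* (c h u)(d h' v) = c d chi^u(h') (h h') (u v), from x_i h' = chi^i(h') h' x_i *)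
Definition emul (a b : elt) : elt :=
  [seq (s.1.1 * t.1.1 * chiw s.2 t.1.2, s.1.2 + t.1.2, s.2 ++ t.2) | s <- a, t <- b].

Definition coef (a : elt) (h : G) (w : seq nat) : K :=
  \sum_(t <- a | (t.1.2 == h) && (t.2 == w)) t.1.1.
Definition eeq (a b : elt) : Prop := forall h w, coef a h w = coef b h w.

Definition inGX (a : elt) : bool :=
  all (fun t => all (fun i => (0 < i <= n)%N) t.2) a.

Definition xgen (i : nat) : elt := [:: (1, 0, [:: i])].

(* p(u,v) = chi^u(g_v) for homogeneous u, v of degrees (words) du, dv *)
Definition pdeg (du dv : seq nat) : K := chiw du (gw dv).

Definition sbracket (du dv : seq nat) (u v : elt) : elt :=
  eadd (emul u v) (escale (- pdeg du dv) (emul v u)).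

(* x_i := x_{2n-i} for n < i < 2n *)
Definition letter (i : nat) : nat := if (i <= n)%N then i else (2 * n - i)%N.

Fixpoint bval (t : btree nat) : elt :=
  match t with
  | BLeaf i => xgen (letter i)
  | BNode l r => sbracket (map letter (frontier l)) (map letter (frontier r))
                          (bval l) (bval r)
  end.

(* the defining relators of U_q^+(sp_2n), as bracketed words *)
Definition is_rel (t : btree nat) : Prop :=
  (exists i, (1 <= i)%N /\ (i.+1 < n)%N /\
     (t = BNode (BLeaf i) (BNode (BLeaf i) (BLeaf i.+1)) \/
      t = BNode (BNode (BLeaf i) (BLeaf i.+1)) (BLeaf i.+1)))
  \/ (exists i j, (1 <= i)%N /\ (i.+1 < j)%N /\ (j <= n)%N /\
        t = BNode (BLeaf i) (BLeaf j))
  \/ t = BNode (BNode (BLeaf n.-1) (BLeaf n)) (BLeaf n)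
  \/ t = BNode (BLeaf n.-1) (BNode (BLeaf n.-1) (BNode (BLeaf n.-1) (BLeaf n))).

Inductive in_ideal : elt -> Prop :=
| in_ideal0 : in_ideal [::]
| in_idealS (z a b : elt) (t : btree nat) :
    in_ideal z -> inGX a -> inGX b -> is_rel t ->
    in_ideal (eadd z (emul (emul a (bval t)) b)).

Definition Ueq (a b : elt) : Prop :=
  exists z, in_ideal z /\ eeq (eadd a (escale (-1) b)) z.

End SkewAlgebra.

Definition ym (n m : nat) : btree nat := rcomb n.+1 (iota n.+2 (m - n.+1)).
Definition atoms (n k m : nat) : seq (btree nat) :=
  [seq BLeaf i | i <- iota k (n - k).+1] ++ [:: ym n m].

(* Call an atom u skew-commuting with v when [u, v] = 0 in U_q^+(sp_2n).  If in a
   sequence of atoms every atom skew-commutes with every atom at distance at least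
   two, the Jacobi identity [u, [v, w]] = [[u, v], w] (valid whenever [u, w] = 0)
   rotates any bracketing into the right comb, so all bracketings agree.  For the
   atoms x_k, ..., x_n, y_m the far pairs x_i, x_j (j >= i + 2) commute by the
   defining relations.  Since phi(m) < k, y_m is the descending comb
   [x_(n-1), [x_(n-2), ..., [x_(j0+1), x_j0]]] with j0 = 2n - m < k, and x_i with
   k <= i < n skew-commutes with it by induction on its length: the two cases not
   covered by the far relations reduce to the quantum Serre relation
   [x_(i+1), [x_(i+1), x_i]] = 0 and to [[x_(i+1), x_(i+2)], [x_(i+1), x_i]] = 0,
   an explicit linear combination of Serre relators. *)
From HB Require Import structures.
From mathcomp Require Import all_boot all_order all_algebra.
From mathcomp Require Import ring zify.
From Stdlib Require Import Setoid Morphisms.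
From Stdlib Require List.
Set Implicit Arguments. Unset Strict Implicit. Unset Printing Implicit Defensive.
Import GRing.Theory.
Local Open Scope ring_scope.

Section FormalSums.
Variables (K : fieldType) (G : zmodType) (chi : nat -> G -> K).
Hypothesis chiM : forall i a b, chi i (a + b) = chi i a * chi i b.

Notation elt := (elt K G).

(* Testing against all linear functionals, rather than comparing coefficients as
   [eeq] does, makes the congruence proofs for [emul] immediate. *)
Definition ev (F : G -> seq nat -> K) (a : elt) : K :=
  \sum_(t <- a) t.1.1 * F t.1.2 t.2.
Definition eqv (a b : elt) := forall F, ev F a = ev F b.

Lemma ev_eadd F (a b : elt) : ev F (eadd a b) = ev F a + ev F b.
Proof. by rewrite /ev /eadd big_cat. Qed.

Lemma ev_nil F : ev F [::] = 0.
Proof. by rewrite /ev big_nil. Qed.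

Lemma ev_escale F c (a : elt) : ev F (escale c a) = c * ev F a.
Proof.
by rewrite /ev /escale big_map mulr_sumr; apply: eq_bigr => t _; rewrite mulrA.
Qed.

Lemma ev_emul F (a b : elt) : ev F (emul chi a b) =
  \sum_(s <- a) s.1.1 * ev (fun h w => chiw chi s.2 h * F (s.1.2 + h) (s.2 ++ w)) b.
Proof.
rewrite /ev /emul big_allpairs_dep; apply: eq_bigr => s _.
by rewrite mulr_sumr; apply: eq_bigr => t _ /=; ring.
Qed.

Lemma eqv_eeq (a b : elt) : eqv a b -> eeq a b.
Proof.
move=> E h w.
have coefE x : coef x h w = ev (fun h' w' => ((h' == h) && (w' == w))%:R) x.
  rewrite /coef /ev big_mkcond; apply: eq_bigr => t _.
  by case: ifP; rewrite ?mulr1 ?mulr0.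
by rewrite !coefE E.
Qed.

Global Instance eqv_equiv : Equivalence eqv.
Proof. by split=> [a F | a b E F | a b c E1 E2 F]; rewrite ?E ?E1 ?E2. Qed.

Global Instance eadd_proper : Proper (eqv ==> eqv ==> eqv) (@eadd K G).
Proof. by move=> a a' Ea b b' Eb F; rewrite !ev_eadd Ea Eb. Qed.

Global Instance escale_proper c : Proper (eqv ==> eqv) (@escale K G c).
Proof. by move=> a a' Ea F; rewrite !ev_escale Ea. Qed.

Global Instance emul_proper : Proper (eqv ==> eqv ==> eqv) (emul chi).
Proof.
move=> a a' Ea b b' Eb F.
have ev_emul_left x : ev F (emul chi x b) =
    ev (fun h w => ev (fun h' w' => chiw chi w h' * F (h + h') (w ++ w')) b) x.
  by rewrite ev_emul.
rewrite ev_emul_left Ea -ev_emul_left !ev_emul.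
by apply: eq_bigr => s _; rewrite Eb.
Qed.

Lemma emulDl (a b c : elt) :
  emul chi (eadd a b) c = eadd (emul chi a c) (emul chi b c).
Proof. by rewrite /emul /eadd allpairs_cat. Qed.

Lemma emulDr (a b c : elt) :
  eqv (emul chi a (eadd b c)) (eadd (emul chi a b) (emul chi a c)).
Proof.
move=> F; rewrite ev_eadd !ev_emul -big_split; apply: eq_bigr => s _ /=.
by rewrite ev_eadd mulrDr.
Qed.

Lemma emulZl k (a b : elt) : emul chi (escale k a) b = escale k (emul chi a b).
Proof.
rewrite /emul /escale allpairs_mapl map_allpairs; apply: eq_allpairs => s t /=.
by rewrite !mulrA.
Qed.

Lemma emulZr k (a b : elt) : emul chi a (escale k b) = escale k (emul chi a b).
Proof.
rewrite /emul /escale allpairs_mapr map_allpairs; apply: eq_allpairs => s t /=.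
by rewrite !mulrA [_ * k]mulrC.
Qed.

Lemma emul0r (a : elt) : eqv (emul chi a [::]) [::].
Proof. by move=> F; rewrite ev_emul ev_nil big1 // => s _; rewrite ev_nil mulr0. Qed.

Lemma emulCl k (a : elt) : emul chi [:: (k, 0, [::])] a = escale k a.
Proof.
rewrite /emul /= cats0; apply: eq_map => -[[c h] w] /=.
by rewrite /chiw big_nil mulr1 add0r.
Qed.

Lemma emul1r (a : elt) : (forall i, chi i 0 = 1) -> emul chi a [:: (1, 0, [::])] = a.
Proof.
move=> chi0; rewrite /emul allpairs1r -[RHS]map_id; apply: eq_map => -[[c h] w] /=.
by rewrite mulr1 addr0 cats0 /chiw big1 ?mulr1 // => i _; rewrite chi0.
Qed.

Lemma chiwD w (h h' : G) : chiw chi w (h + h') = chiw chi w h * chiw chi w h'.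
Proof. by rewrite /chiw -big_split; apply: eq_bigr => i _; rewrite chiM. Qed.

Lemma chiw_cat w w' (h : G) : chiw chi (w ++ w') h = chiw chi w h * chiw chi w' h.
Proof. by rewrite /chiw big_cat. Qed.

Lemma emulA (a b c : elt) : emul chi (emul chi a b) c = emul chi a (emul chi b c).
Proof.
elim: a => [//|s a IH].
rewrite /emul /= allpairs_cat -/(emul chi a b) -/(emul chi (emul chi a b) c) IH.
congr (_ ++ _); rewrite allpairs_mapl map_allpairs; apply: eq_allpairs => t u /=.
by rewrite chiw_cat chiwD addrA catA; congr (_, _, _); ring.
Qed.

Variable g : nat -> G.
Notation br := (sbracket g chi).

Lemma pdeg_catl a a' b : pdeg g chi (a ++ a') b = pdeg g chi a b * pdeg g chi a' b.
Proof. by rewrite /pdeg chiw_cat. Qed.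

Lemma pdeg_catr a b b' : pdeg g chi a (b ++ b') = pdeg g chi a b * pdeg g chi a b'.
Proof. by rewrite /pdeg /gw big_cat chiwD. Qed.

Ltac expand_eqv :=
  rewrite /sbracket;
  repeat progress rewrite ?emulDl ?emulZl ?emulZr ?emulA ?emulDr;
  move=> F; repeat progress rewrite ?ev_eadd ?ev_escale ?pdeg_catl ?pdeg_catr.

Lemma mul_eq_div (x y c : K) : x * y = c -> c != 0 -> y = c / x /\ x != 0.
Proof.
move=> xy c0; have x0 : x != 0 by apply: contraNneq c0 => x0; rewrite -xy x0 mul0r.
by split=> //; rewrite -xy [x * y]mulrC mulfK.
Qed.

Lemma sbracket_jacobi a b c (u v w : elt) :
  eqv (br a (b ++ c) u (br b c v w))
      (eadd (br (a ++ b) c (br a b u v) w)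
        (eadd (escale (- pdeg g chi b c) (emul chi (br a c u w) v))
              (escale (pdeg g chi a b) (emul chi v (br a c u w))))).
Proof. by expand_eqv; ring. Qed.

Lemma sbracket_antisym da db (u v : elt) :
  pdeg g chi da db * pdeg g chi db da = 1 ->
  eqv (br db da v u) (escale (- pdeg g chi db da) (br da db u v)).
Proof.
move=> /mul_eq_div[|E x0]; first exact: oner_neq0.
by expand_eqv; rewrite E; field.
Qed.

Lemma sbracket_serre da db (a b : elt) qq : qq != 0 -> pdeg g chi db db = qq ->
  pdeg g chi da db * pdeg g chi db da = qq^-1 ->
  eqv (br db (db ++ da) b (br db da b a))
      (escale (pdeg g chi db da ^+ 2 * qq) (br (da ++ db) db (br da db a b) b)).
Proof.
move=> q0 Hb /mul_eq_div[|E x0]; first by rewrite invr_eq0.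
by expand_eqv; rewrite Hb E; field; rewrite q0 x0.
Qed.

(* Every summand on the right has one of SAB, SCA, CB as a factor, so the left side
   vanishes as soon as these do. *)
Lemma sbracket_core dA dB dC (A B C : elt) qq a c d :
  qq != 0 -> 1 + qq != 0 ->
  pdeg g chi dA dA = qq -> pdeg g chi dB dB = qq -> pdeg g chi dC dC = qq ->
  pdeg g chi dA dB = a -> a * pdeg g chi dB dA = qq^-1 ->
  pdeg g chi dA dC = c -> c * pdeg g chi dC dA = qq^-1 ->
  pdeg g chi dB dC = d -> d * pdeg g chi dC dB = 1 ->
  let SAB := br dA (dA ++ dB) A (br dA dB A B) in
  let SCA := br (dC ++ dA) dA (br dC dA C A) A in
  let CB := br dC dB C B in
  eqv (br (dA ++ dB) (dA ++ dC) (br dA dB A B) (br dA dC A C))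
   (escale (1 + qq)^-1
    (eadd (escale (c ^+ 2 * d / a) (emul chi C SAB))
    (eadd (escale (- a^-1) (emul chi SAB C))
    (eadd (escale (- (qq * a * c ^+ 2)) (emul chi B SCA))
    (eadd (escale (qq * c ^+ 2 * d / a) (emul chi SCA B))
    (eadd (escale (- (d / a)) (emul chi A (emul chi A CB)))
    (eadd (escale ((1 + qq) * c * d) (emul chi (emul chi A CB) A))
          (escale (- (qq * a * c ^+ 2 * d)) (emul chi CB (emul chi A A)))))))))).
Proof.
move=> q0 q1; have qi0 : qq^-1 != 0 by rewrite invr_eq0.
move=> HA HB HC Ha /mul_eq_div[//|Ha' a0] Hc /mul_eq_div[//|Hc' c0].
move=> Hd /mul_eq_div[|Hd' d0]; first exact: oner_neq0.
move=> SAB SCA CB; rewrite /SAB /SCA /CB.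
expand_eqv; rewrite ?HA ?HB ?HC ?Ha ?Ha' ?Hc ?Hc' ?Hd ?Hd'.
by field; rewrite q0 q1 a0 c0 d0.
Qed.

End FormalSums.
Arguments ev {K G}.
Arguments eqv {K G}.

Lemma frontier_bjoin (A : Type) (T : btree (btree A)) :
  frontier (bjoin T) = flatten [seq frontier t | t <- frontier T].
Proof.
elim: T => [t|L IHL R IHR] /=; first by rewrite cats0.
by rewrite IHL IHR map_cat flatten_cat.
Qed.

Lemma frontier_rcomb a s : frontier (rcomb a s) = a :: s.
Proof. by elim: s a => [|b s IH] a //=; rewrite IH. Qed.

Lemma frontier_cons (A : Type) (T : btree A) : exists u s, frontier T = u :: s.
Proof.
elim: T => [a|L [u [s E]] R _] /=; first by exists a, [::].
by exists u, (s ++ frontier R); rewrite E.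
Qed.

Lemma Forall_cat (A : Type) (P : A -> Prop) (s1 s2 : seq A) :
  List.Forall P (s1 ++ s2) <-> List.Forall P s1 /\ List.Forall P s2.
Proof.
elim: s1 => [|a s1 IH] /=; first by split=> [|[]] //.
by rewrite !List.Forall_cons_iff IH; tauto.
Qed.

Fixpoint btree_map (A B : Type) (f : A -> B) (t : btree A) : btree B :=
  match t with
  | BLeaf i => BLeaf (f i)
  | BNode l r => BNode (btree_map f l) (btree_map f r)
  end.

Section Letters.
Variable n : nat.

Lemma letter_id i : (i <= n)%N -> letter n i = i.
Proof. by rewrite /letter => ->. Qed.

Lemma letter_gt i : (n < i)%N -> letter n i = (2 * n - i)%N.
Proof. by rewrite /letter; case: ifP => //; lia. Qed.

Lemma letter_le i : (letter n i <= n)%N.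
Proof. by rewrite /letter; case: ifP => //; lia. Qed.

Lemma letter_idem i : letter n (letter n i) = letter n i.
Proof. by rewrite letter_id // letter_le. Qed.

End Letters.

Section Quotient.
Variables (K : fieldType) (G : zmodType) (n : nat).
Variables (g : nat -> G) (chi : nat -> G -> K).
Hypothesis chiM : forall i a b, chi i (a + b) = chi i a * chi i b.

Notation elt := (elt K G).
Notation br := (sbracket g chi).
Notation bv := (bval n g chi).
Notation dg t := (map (letter n) (frontier t)).

Inductive Uzero : elt -> Prop :=
| Uzero_nil : Uzero [::]
| Uzero_rel t : is_rel n t -> Uzero (bv t)
| Uzero_add a b : Uzero a -> Uzero b -> Uzero (eadd a b)
| Uzero_mull c a : Uzero a -> Uzero (emul chi c a)
| Uzero_mulr a c : Uzero a -> Uzero (emul chi a c)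
| Uzero_scale k a : Uzero a -> Uzero (escale k a)
| Uzero_eqv a b : eqv a b -> Uzero a -> Uzero b.

Definition ueq (a b : elt) := Uzero (eadd a (escale (-1) b)).

Global Instance ueq_equiv : Equivalence ueq.
Proof.
split.
- move=> a; apply: (Uzero_eqv _ Uzero_nil) => F.
  by rewrite ev_eadd ev_escale ev_nil; ring.
- move=> a b H; apply: (Uzero_eqv _ (Uzero_scale (-1) H)) => F.
  by rewrite !ev_escale !ev_eadd !ev_escale; ring.
- move=> a b c H1 H2; apply: (Uzero_eqv _ (Uzero_add H1 H2)) => F.
  by rewrite !ev_eadd !ev_escale; ring.
Qed.

Global Instance eqv_ueq : subrelation eqv ueq.
Proof.
move=> a b E; apply: (Uzero_eqv _ Uzero_nil) => F.
by rewrite ev_eadd ev_escale ev_nil E; ring.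
Qed.

Global Instance ueq_eadd : Proper (ueq ==> ueq ==> ueq) (@eadd K G).
Proof.
move=> a a' Ha b b' Hb; apply: (Uzero_eqv _ (Uzero_add Ha Hb)) => F.
by rewrite !ev_eadd !ev_escale !ev_eadd; ring.
Qed.

Global Instance ueq_escale k : Proper (ueq ==> ueq) (@escale K G k).
Proof.
move=> a a' Ha; apply: (Uzero_eqv _ (Uzero_scale k Ha)) => F.
by rewrite !ev_eadd !ev_escale !ev_eadd !ev_escale; ring.
Qed.

Global Instance ueq_emul : Proper (ueq ==> ueq ==> ueq) (emul chi).
Proof.
move=> a a' Ha b b' Hb; transitivity (emul chi a' b).
  by apply: (Uzero_eqv _ (Uzero_mulr b Ha)); rewrite emulDl emulZl.
by apply: (Uzero_eqv _ (Uzero_mull a' Hb)); rewrite emulDr emulZr.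
Qed.

Global Instance ueq_sbracket da db : Proper (ueq ==> ueq ==> ueq) (br da db).
Proof. by move=> a a' Ha b b' Hb; rewrite /sbracket Ha Hb; reflexivity. Qed.

Lemma sbracket0l da db (a : elt) : eqv (br da db [::] a) [::].
Proof. by rewrite /sbracket emul0r. Qed.

Lemma sbracket0r da db (a : elt) : eqv (br da db a [::]) [::].
Proof. by rewrite /sbracket emul0r. Qed.

Lemma bval_rel t : is_rel n t -> ueq (bv t) [::].
Proof. by move=> Ht; rewrite /ueq /eadd /= cats0; apply: Uzero_rel. Qed.

Definition skew_commute (t1 t2 : btree nat) := ueq (bv (BNode t1 t2)) [::].

Lemma bval_node l r : bv (BNode l r) = br (dg l) (dg r) (bv l) (bv r).
Proof. by []. Qed.

Lemma dg_node l r : dg (BNode l r) = dg l ++ dg r.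
Proof. by rewrite /= map_cat. Qed.

Lemma bval_jacobi u v w : ueq (bv (BNode u (BNode v w)))
  (eadd (bv (BNode (BNode u v) w))
   (eadd (escale (- pdeg g chi (dg v) (dg w)) (emul chi (bv (BNode u w)) (bv v)))
         (escale (pdeg g chi (dg u) (dg v)) (emul chi (bv v) (bv (BNode u w)))))).
Proof. by rewrite /= map_cat (sbracket_jacobi chiM) map_cat; reflexivity. Qed.

Lemma bval_assoc u v w : skew_commute u w ->
  ueq (bv (BNode u (BNode v w))) (bv (BNode (BNode u v) w)).
Proof.
rewrite /skew_commute bval_jacobi => ->.
rewrite emul0r; apply: eqv_ueq => F.
by rewrite !ev_eadd !ev_escale !ev_nil; ring.
Qed.

Lemma skew_commute_noder u v w :
  skew_commute u v -> skew_commute u w -> skew_commute u (BNode v w).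
Proof.
move=> Huv Huw; rewrite /skew_commute bval_assoc //.
by move: Huv; rewrite /skew_commute /= => ->; rewrite sbracket0l; reflexivity.
Qed.

Lemma skew_commute_nodel u v w :
  skew_commute u w -> skew_commute v w -> skew_commute (BNode u v) w.
Proof.
move=> Huw Hvw; rewrite /skew_commute -bval_assoc //.
by move: Hvw; rewrite /skew_commute /= => ->; rewrite sbracket0r; reflexivity.
Qed.

Lemma skew_commute_sym u v :
  pdeg g chi (dg u) (dg v) * pdeg g chi (dg v) (dg u) = 1 ->
  skew_commute u v -> skew_commute v u.
Proof.
rewrite /skew_commute /= => H Huv; rewrite (sbracket_antisym (bv u) (bv v) H) Huv.
by apply: eqv_ueq => F; rewrite ev_escale ev_nil mulr0.
Qed.

Lemma bval_nodel0 t w : ueq (bv t) [::] -> ueq (bv (BNode t w)) [::].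
Proof. by move=> /= ->; rewrite sbracket0l; reflexivity. Qed.

Lemma bval_node_ueq l r l' r' : dg l = dg l' -> dg r = dg r' ->
  ueq (bv l) (bv l') -> ueq (bv r) (bv r') -> ueq (bv (BNode l r)) (bv (BNode l' r')).
Proof. by move=> /= El Er Hl Hr; rewrite El Er Hl Hr; reflexivity. Qed.

Fixpoint comb (u : btree nat) (s : seq (btree nat)) : btree nat :=
  if s is v :: s' then BNode u (comb v s') else u.

Fixpoint far_commuting (s : seq (btree nat)) : Prop :=
  if s is u :: s' then List.Forall (skew_commute u) (behead s') /\ far_commuting s'
  else True.

Lemma far_commuting_cat s1 s2 :
  far_commuting (s1 ++ s2) -> far_commuting s1 /\ far_commuting s2.
Proof.
elim: s1 => [//|a s1 IH] /= [Ha /IH[H1 H2]]; do !split=> //.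
by case: s1 {IH H1} Ha => [//|b s1] /= /Forall_cat[].
Qed.

Lemma dg_comb u s : dg (comb u s) = flatten [seq dg t | t <- u :: s].
Proof. by elim: s u => [|v s IH] u /=; rewrite ?cats0 // map_cat IH. Qed.

Lemma dg_bjoin (T : btree (btree nat)) :
  dg (bjoin T) = flatten [seq dg t | t <- frontier T].
Proof. by rewrite frontier_bjoin map_flatten -map_comp. Qed.

Lemma skew_commute_comb u v s :
  List.Forall (skew_commute u) (v :: s) -> skew_commute u (comb v s).
Proof.
elim: s v => [|w s IH] v /= Hs; first by case/List.Forall_cons_iff: Hs.
case/List.Forall_cons_iff: Hs => Hv Hs.
by apply: skew_commute_noder => //; apply: IH.
Qed.

Lemma bval_node_comb u s1 v s2 : far_commuting (u :: s1 ++ v :: s2) ->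
  ueq (bv (BNode (comb u s1) (comb v s2))) (bv (comb u (s1 ++ v :: s2))).
Proof.
elim: s1 u => [|u' s1 IH] u; first by reflexivity.
case=> Hu Hs; rewrite /= in Hu.
have Hc : skew_commute u (comb v s2).
  by apply: skew_commute_comb; move/Forall_cat: Hu => [].
rewrite -bval_assoc //; apply: bval_node_ueq; [by [] | | reflexivity | exact: IH].
by rewrite [frontier (BNode _ _)]/= map_cat !dg_comb -flatten_cat -map_cat.
Qed.

Lemma bval_bjoin_comb (T : btree (btree nat)) u s :
  frontier T = u :: s -> far_commuting (u :: s) -> ueq (bv (bjoin T)) (bv (comb u s)).
Proof.
elim: T u s => [t|L IHL R IHR] u s /=; first by case=> -> <- _; reflexivity.
have [u1 [s1 EL]] := frontier_cons L; have [v [s2 ER]] := frontier_cons R.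
rewrite EL ER /= => -[<- <-] Hs.
have [HL HR] := far_commuting_cat (s1 := u1 :: s1) Hs.
rewrite -(bval_node_comb Hs); apply: bval_node_ueq.
- by rewrite dg_bjoin dg_comb EL.
- by rewrite dg_bjoin dg_comb ER.
- exact: IHL.
- exact: IHR.
Qed.

Lemma bval_far_commuting (T1 T2 : btree (btree nat)) s :
  frontier T1 = s -> frontier T2 = s -> far_commuting s ->
  ueq (bv (bjoin T1)) (bv (bjoin T2)).
Proof.
case: s => [|u s] E1 E2 Hs; first by case: (frontier_cons T1) => u [s']; rewrite E1.
by rewrite (bval_bjoin_comb E1 Hs) (bval_bjoin_comb E2 Hs); reflexivity.
Qed.

Section Relations.
Variable q : K.
Hypothesis hq0 : q != 0.
Hypothesis hq1 : q != -1.
Hypothesis hpii : forall i, (1 <= i)%N -> (i < n)%N -> pp g chi i i = q.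
Hypothesis hpi1 : forall i, (1 < i)%N -> (i < n)%N ->
  pp g chi i i.-1 * pp g chi i.-1 i = q^-1.
Hypothesis hpij : forall i j, (1 <= i)%N -> (i.+1 < j)%N -> (j <= n)%N ->
  pp g chi i j * pp g chi j i = 1.

Lemma pdeg_letter i j : (i <= n)%N -> (j <= n)%N ->
  pdeg g chi (dg (BLeaf i)) (dg (BLeaf j)) = pp g chi i j.
Proof.
move=> hi hj; rewrite /= !letter_id //.
by rewrite /pdeg /chiw /gw !big_cons !big_nil addr0 mulr1.
Qed.

Lemma skew_commute_far i j : (1 <= i)%N -> (i.+1 < j)%N -> (j <= n)%N ->
  skew_commute (BLeaf i) (BLeaf j).
Proof. by move=> hi hij hj; apply: bval_rel; right; left; exists i, j. Qed.

Lemma skew_commute_far_sym i j : (1 <= i)%N -> (i.+1 < j)%N -> (j <= n)%N ->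
  skew_commute (BLeaf j) (BLeaf i).
Proof.
move=> hi hij hj; apply: skew_commute_sym; last exact: skew_commute_far.
rewrite !pdeg_letter ?hpij //; lia.
Qed.

Lemma skew_commute_serre j : (1 <= j)%N -> (j.+1 < n)%N ->
  skew_commute (BLeaf j.+1) (BNode (BLeaf j.+1) (BLeaf j)).
Proof.
move=> hj hjn.
have Hq : pdeg g chi (dg (BLeaf j.+1)) (dg (BLeaf j.+1)) = q.
  by rewrite pdeg_letter ?hpii //; lia.
have Hp : pdeg g chi (dg (BLeaf j)) (dg (BLeaf j.+1)) *
          pdeg g chi (dg (BLeaf j.+1)) (dg (BLeaf j)) = q^-1.
  by rewrite !pdeg_letter 1?mulrC ?(hpi1 (i := j.+1)) //; lia.
have Hrel : ueq (bv (BNode (BNode (BLeaf j) (BLeaf j.+1)) (BLeaf j.+1))) [::].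
  by apply: bval_rel; left; exists j; do 2!split=> //; right.
move: Hrel; rewrite /skew_commute !bval_node !dg_node => Hrel.
rewrite (sbracket_serre chiM _ _ hq0 Hq Hp) Hrel.
by apply: eqv_ueq => F; rewrite ev_escale ev_nil mulr0.
Qed.

Lemma bracket_core_vanishes j : (1 <= j)%N -> (j.+2 < n)%N ->
  ueq (bv (BNode (BNode (BLeaf j.+1) (BLeaf j.+2)) (BNode (BLeaf j.+1) (BLeaf j)))) [::].
Proof.
move=> hj hjn.
have R1 : ueq (bv (BNode (BLeaf j.+1) (BNode (BLeaf j.+1) (BLeaf j.+2)))) [::].
  by apply: bval_rel; left; exists j.+1; do 2!split=> //; left.
have R2 : ueq (bv (BNode (BNode (BLeaf j) (BLeaf j.+1)) (BLeaf j.+1))) [::].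
  by apply: bval_rel; left; exists j; split=> //; split; [lia | right].
have R3 : skew_commute (BLeaf j) (BLeaf j.+2) by apply: skew_commute_far; lia.
have q1 : 1 + q != 0 by rewrite addrC addr_eq0.
have Hq i : (1 <= i <= j.+2)%N -> pdeg g chi (dg (BLeaf i)) (dg (BLeaf i)) = q.
  by case/andP=> h1 h2; rewrite pdeg_letter ?hpii //; lia.
have Pab : pdeg g chi (dg (BLeaf j.+1)) (dg (BLeaf j.+2)) = pp g chi j.+1 j.+2.
  by apply: pdeg_letter; lia.
have Pca : pdeg g chi (dg (BLeaf j.+1)) (dg (BLeaf j)) = pp g chi j.+1 j.
  by apply: pdeg_letter; lia.
have Pbc : pdeg g chi (dg (BLeaf j.+2)) (dg (BLeaf j)) = pp g chi j.+2 j.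
  by apply: pdeg_letter; lia.
have Pab' : pp g chi j.+1 j.+2 * pdeg g chi (dg (BLeaf j.+2)) (dg (BLeaf j.+1)) = q^-1.
  by rewrite pdeg_letter 1?mulrC ?(hpi1 (i := j.+2)) //; lia.
have Pca' : pp g chi j.+1 j * pdeg g chi (dg (BLeaf j)) (dg (BLeaf j.+1)) = q^-1.
  by rewrite pdeg_letter ?(hpi1 (i := j.+1)) //; lia.
have Pbc' : pp g chi j.+2 j * pdeg g chi (dg (BLeaf j)) (dg (BLeaf j.+2)) = 1.
  by rewrite pdeg_letter 1?mulrC ?hpij //; lia.
have := sbracket_core chiM (bv (BLeaf j.+1)) (bv (BLeaf j.+2)) (bv (BLeaf j)) hq0 q1
  (Hq j.+1 ltac:(lia)) (Hq j.+2 ltac:(lia)) (Hq j ltac:(lia)) Pab Pab' Pca Pca' Pbc Pbc'.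
move: R1 R2 R3; rewrite /skew_commute !bval_node !dg_node => R1 R2 R3.
cbv zeta; move=> ->; rewrite R1 R2 R3 !emul0r /eadd /escale /=; reflexivity.
Qed.

Fixpoint dcomb (j0 d : nat) : btree nat :=
  if d is d'.+1 then BNode (BLeaf (j0 + d').+1) (dcomb j0 d') else BLeaf j0.

Lemma skew_commute_far_dcomb i j0 d : (1 <= j0)%N -> ((j0 + d).+2 <= i)%N -> (i <= n)%N ->
  skew_commute (BLeaf i) (dcomb j0 d).
Proof.
move=> hj0; elim: d => [|d IH] hi hin /=; first by apply: skew_commute_far_sym; lia.
by apply: skew_commute_noder; [apply: skew_commute_far_sym | apply: IH]; lia.
Qed.

Lemma bval_dcomb_assoc j0 d : (1 <= j0)%N -> ((j0 + d).+2 <= n)%N ->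
  ueq (bv (BNode (BLeaf (j0 + d).+2) (dcomb j0 d.+1)))
      (bv (BNode (BNode (BLeaf (j0 + d).+2) (BLeaf (j0 + d).+1)) (dcomb j0 d))).
Proof. by move=> hj0 hd; apply: bval_assoc; apply: skew_commute_far_dcomb. Qed.

Lemma skew_commute_serre_dcomb j0 d : (1 <= j0)%N -> ((j0 + d).+1 < n)%N ->
  skew_commute (BLeaf (j0 + d).+1) (BNode (BLeaf (j0 + d).+1) (dcomb j0 d)).
Proof.
move=> hj0; case: d => [|d]; first by rewrite addn0; apply: skew_commute_serre.
rewrite addnS => hd; rewrite /skew_commute.
rewrite (bval_node_ueq (l' := BLeaf (j0 + d).+2) _ _ _ (bval_dcomb_assoc hj0 _)) //;
  [| reflexivity | lia].
rewrite bval_assoc; last by apply: skew_commute_far_dcomb; lia.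
by apply: bval_nodel0; apply: skew_commute_serre; lia.
Qed.

Lemma skew_commute_core_dcomb j0 d : (1 <= j0)%N -> ((j0 + d).+2 < n)%N ->
  skew_commute (BLeaf (j0 + d).+1)
    (BNode (BLeaf (j0 + d).+2) (BNode (BLeaf (j0 + d).+1) (dcomb j0 d))).
Proof.
move=> hj0 hd; rewrite /skew_commute bval_assoc; last first.
  by apply: skew_commute_serre_dcomb; lia.
case: d hd => [|d] hd; first by rewrite addn0 in hd *; apply: bracket_core_vanishes.
rewrite addnS in hd *.
rewrite (bval_node_ueq (l' := BNode (BLeaf (j0 + d).+2) (BLeaf (j0 + d).+3)) _ _ _
  (bval_dcomb_assoc hj0 _)); [| by [] | by rewrite !dg_node catA | reflexivity | lia].
rewrite bval_assoc; last by apply: skew_commute_nodel; apply: skew_commute_far_dcomb; lia.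
by apply: bval_nodel0; apply: bracket_core_vanishes; lia.
Qed.

Lemma skew_commute_dcomb i j0 d : (1 <= j0)%N -> (j0 < i <= j0 + d)%N -> (j0 + d < n)%N ->
  skew_commute (BLeaf i) (dcomb j0 d).
Proof.
move=> hj0; elim: d => [|d IH] hi hd; first lia.
have [->|ne_i] := eqVneq i (j0 + d).+1.
  by apply: skew_commute_serre_dcomb; lia.
case: d IH hi hd ne_i => [|d] IH hi hd ne_i; first lia.
have [->|ne_i'] := eqVneq i (j0 + d).+1.
  by rewrite /= addnS; apply: skew_commute_core_dcomb; lia.
by apply: skew_commute_noder; [apply: skew_commute_far | apply: IH]; lia.
Qed.

Lemma bval_map_letter t : bv (btree_map (letter n) t) = bv t.
Proof.
have dgE u : dg (btree_map (letter n) u) = dg u.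
  elim: u => [i|l IHl r IHr] /=; first by rewrite letter_idem.
  by rewrite !map_cat IHl IHr.
elim: t => [i|l IHl r IHr]; first by rewrite /= letter_idem.
by rewrite !bval_node !dgE IHl IHr.
Qed.

(* Read through x_i = x_(2n-i), y_m = [x_(n+1), [..., x_m]] is the descending comb
   [x_(n-1), [x_(n-2), ..., x_(2n-m)]]. *)
Lemma map_letter_rcomb a d : (n < a)%N -> (a + d < 2 * n)%N ->
  btree_map (letter n) (rcomb a (iota a.+1 d)) = dcomb (letter n (a + d)) d.
Proof.
elim: d a => [|d IH] a ha had /=; first by rewrite addn0.
rewrite IH; [|lia|lia]; rewrite addSnnS; congr (BNode (BLeaf _) _).
by rewrite !letter_gt; lia.
Qed.

Lemma skew_commute_ym i m : (2 * n - m < i < n)%N -> (m < 2 * n)%N ->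
  skew_commute (BLeaf i) (ym n m).
Proof.
move=> hi hm; rewrite /skew_commute -bval_map_letter [btree_map _ _]/= letter_id; last lia.
rewrite map_letter_rcomb; [|lia|lia].
by apply: skew_commute_dcomb; rewrite letter_gt; lia.
Qed.

Lemma Forall_skew_commute_far i a len : (1 <= i)%N -> (i.+1 < a)%N -> (a + len <= n.+1)%N ->
  List.Forall (skew_commute (BLeaf i)) [seq BLeaf j | j <- iota a len].
Proof.
elim: len a => [|len IH] a hi ha hlen //=.
by constructor; [apply: skew_commute_far | apply: IH]; lia.
Qed.

Lemma far_commuting_leaves Y a len : (1 <= a)%N -> (a + len <= n)%N ->
  (forall i, (a <= i < a + len)%N -> skew_commute (BLeaf i) Y) ->
  far_commuting ([seq BLeaf i | i <- iota a len.+1] ++ [:: Y]).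
Proof.
elim: len a => [|len IH] a ha hlen HY /=; first by do !split.
split; last by apply: IH => [||i hi]; [lia | lia | apply: HY; lia].
apply/Forall_cat; split; first by apply: Forall_skew_commute_far; lia.
by constructor; [apply: HY; lia | constructor].
Qed.

Theorem bval_atoms_ueq k m (T1 T2 : btree (btree nat)) :
  (1 <= k <= n)%N -> (2 * n - k < m < 2 * n)%N ->
  frontier T1 = atoms n k m -> frontier T2 = atoms n k m ->
  ueq (bv (bjoin T1)) (bv (bjoin T2)).
Proof.
move=> hk hm E1 E2; apply: (bval_far_commuting E1 E2).
apply: far_commuting_leaves => [||i hi]; [lia | lia | apply: skew_commute_ym; lia].
Qed.

End Relations.

End Quotient.

Definition over_alphabet (n : nat) (w : seq nat) := all (fun i => (0 < i <= n)%N) w.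
Definition well_lettered (n : nat) (t : btree nat) :=
  all (fun i => (0 < letter n i)%N) (frontier t).

Lemma over_alphabet_letters n t :
  well_lettered n t -> over_alphabet n (map (letter n) (frontier t)).
Proof.
move=> /allP Ht; rewrite /over_alphabet all_map.
by apply/allP => i /Ht /= ->; rewrite letter_le.
Qed.

Lemma well_lettered_rel n t : (2 <= n)%N -> is_rel n t -> well_lettered n t.
Proof.
have P i : (0 < i <= n)%N -> (0 < letter n i)%N by case/andP=> ? ?; rewrite letter_id.
move=> hn; case=> [[i [h1 [h2 [->| ->]]]]|[[i [j [h1 [h2 [h3 ->]]]]]|[->| ->]]] /=;
  rewrite /well_lettered /= ?andbT; do ?[apply/andP; split]; apply: P; lia.
Qed.

Section IdealOfGX.
Variables (K : fieldType) (G : zmodType) (n : nat).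
Variables (g : nat -> G) (chi : nat -> G -> K).
Hypothesis chiM : forall i a b, chi i (a + b) = chi i a * chi i b.
Hypothesis chi0 : forall i, chi i 0 = 1.
Hypothesis hn : (2 <= n)%N.

Notation elt := (elt K G).

Lemma inGX_eadd (a b : elt) : inGX n (eadd a b) = inGX n a && inGX n b.
Proof. by rewrite /inGX /eadd all_cat. Qed.

Lemma inGX_escale k (a : elt) : inGX n (escale k a) = inGX n a.
Proof. by rewrite /inGX /escale all_map. Qed.

Lemma inGX_emul (a b : elt) : inGX n a -> inGX n b -> inGX n (emul chi a b).
Proof.
move=> Ha Hb; apply/allP => t /allpairsP [[s u] [hs hu ->]] /=.
by rewrite all_cat (allP Ha s hs) (allP Hb u hu).
Qed.

Lemma inGX_bval t : well_lettered n t -> inGX n (bval n g chi t).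
Proof.
elim: t => [i|l IHl r IHr].
  by move=> /over_alphabet_letters; rewrite /inGX /over_alphabet /= !andbT.
rewrite /well_lettered /= all_cat => /andP [hl hr].
by rewrite /sbracket inGX_eadd inGX_escale !inGX_emul ?IHl ?IHr.
Qed.

(* Dropping the terms whose word leaves the alphabet is multiplicative, so it maps
   [Uzero], whose multipliers are arbitrary formal sums, into the ideal of G<X>. *)
Definition restrictGX (a : elt) : elt := [seq t <- a | over_alphabet n t.2].

Lemma restrictGX_id (a : elt) : inGX n a -> restrictGX a = a.
Proof. exact/all_filterP. Qed.

Lemma restrictGX_eadd (a b : elt) :
  restrictGX (eadd a b) = eadd (restrictGX a) (restrictGX b).
Proof. by rewrite /restrictGX /eadd filter_cat. Qed.

Lemma restrictGX_escale k (a : elt) : restrictGX (escale k a) = escale k (restrictGX a).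
Proof. by rewrite /restrictGX /escale filter_map. Qed.

Lemma restrictGX_emul (a b : elt) :
  restrictGX (emul chi a b) = emul chi (restrictGX a) (restrictGX b).
Proof.
elim: a => [//|s a IH]; rewrite /emul /= -/(emul chi a b) {1}/restrictGX filter_cat.
rewrite -/(restrictGX (emul chi a b)) IH.
have catE t : over_alphabet n (s.2 ++ t.2) = over_alphabet n s.2 && over_alphabet n t.2.
  by rewrite /over_alphabet all_cat.
rewrite filter_map; case: ifP => hs /=.
  by congr (_ ++ _); congr map; apply: eq_filter => t; rewrite /preim /= catE hs.
by rewrite (@eq_filter _ _ pred0) ?filter_pred0 // => t; rewrite /preim /= catE hs.
Qed.

Lemma restrictGX_eqv (a b : elt) : eqv a b -> eqv (restrictGX a) (restrictGX b).
Proof.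
move=> E F; have evE x : ev F (restrictGX x) =
    ev (fun h w => if over_alphabet n w then F h w else 0) x.
  by rewrite /ev big_filter big_mkcond; apply: eq_bigr => t _; case: ifP; rewrite ?mulr0.
by rewrite !evE E.
Qed.

Definition ideal_equiv (x : elt) := exists2 z, in_ideal n g chi z & eqv x z.

Lemma in_ideal_eadd (z1 z2 : elt) :
  in_ideal n g chi z1 -> in_ideal n g chi z2 -> in_ideal n g chi (eadd z1 z2).
Proof.
move=> H1; elim=> [|z a b t _ IH Ha Hb Ht]; first by rewrite /eadd cats0.
by rewrite /eadd catA; apply: in_idealS.
Qed.

Lemma ideal_equiv_eqv (x y : elt) : eqv x y -> ideal_equiv x -> ideal_equiv y.
Proof. by move=> E [z Hz Ex]; exists z; rewrite // -E. Qed.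

Lemma ideal_equiv_eadd (x y : elt) :
  ideal_equiv x -> ideal_equiv y -> ideal_equiv (eadd x y).
Proof.
move=> [z1 H1 E1] [z2 H2 E2].
by exists (eadd z1 z2); [apply: in_ideal_eadd | rewrite E1 E2].
Qed.

Lemma ideal_equiv_mull (c x : elt) :
  inGX n c -> ideal_equiv x -> ideal_equiv (emul chi c x).
Proof.
move=> Hc [z Hz Ex]; apply: (@ideal_equiv_eqv (emul chi c z)); first by rewrite Ex.
elim: Hz => [|z' a b t _ [z'' Hz'' E] Ha Hb Ht].
  by exists [::]; [constructor | rewrite emul0r].
exists (eadd z'' (emul chi (emul chi (emul chi c a) (bval n g chi t)) b)).
  by apply: in_idealS => //; apply: inGX_emul.
by rewrite emulDr E !emulA.
Qed.

Lemma ideal_equiv_mulr (c x : elt) :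
  inGX n c -> ideal_equiv x -> ideal_equiv (emul chi x c).
Proof.
move=> Hc [z Hz Ex]; apply: (@ideal_equiv_eqv (emul chi z c)); first by rewrite Ex.
elim: Hz => [|z' a b t _ [z'' Hz'' E] Ha Hb Ht].
  by exists [::]; [constructor | reflexivity].
exists (eadd z'' (emul chi (emul chi a (bval n g chi t)) (emul chi b c))).
  by apply: in_idealS => //; apply: inGX_emul.
by rewrite emulDl E !emulA.
Qed.

Lemma inGX_restrictGX (a : elt) : inGX n (restrictGX a).
Proof. exact/all_filterP/filter_id. Qed.

Lemma Uzero_ideal_equiv x : Uzero n g chi x -> ideal_equiv (restrictGX x).
Proof.
elim=> {x} [|t Ht|a b _ Ha _ Hb|c a _ Ha|a c _ Ha|k a _ Ha|a b E _ Ha].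
- by exists [::]; [constructor | reflexivity].
- have HGX := inGX_bval (well_lettered_rel hn Ht).
  rewrite restrictGX_id //.
  pose one : elt := [:: (1, 0, [::])].
  exists (eadd [::] (emul chi (emul chi one (bval n g chi t)) one)).
    by apply: in_idealS => //; constructor.
  by rewrite emul1r // emulCl => F; rewrite ev_eadd ev_nil ev_escale !add0r mul1r.
- by rewrite restrictGX_eadd; apply: ideal_equiv_eadd.
- by rewrite restrictGX_emul; apply: ideal_equiv_mull => //; apply: inGX_restrictGX.
- by rewrite restrictGX_emul; apply: ideal_equiv_mulr => //; apply: inGX_restrictGX.
- rewrite restrictGX_escale -(emulCl chi).
  by apply: ideal_equiv_mull => //; rewrite /inGX /= andbT.
- by apply: ideal_equiv_eqv Ha; apply: restrictGX_eqv.
Qed.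

Lemma Ueq_of_ueq (a b : elt) : inGX n a -> inGX n b -> ueq n g chi a b -> Ueq n g chi a b.
Proof.
move=> Ha Hb /Uzero_ideal_equiv[z Hz E]; exists z; split=> //.
by apply: eqv_eeq; rewrite -E restrictGX_id // inGX_eadd inGX_escale Ha.
Qed.

End IdealOfGX.

Section CharacterExtension.
Variables (K : fieldType) (G : zmodType) (n : nat) (g : nat -> G).
Variables (chi chi' : nat -> G -> K).
Hypothesis chi'E : forall i h, (0 < i <= n)%N -> chi' i h = chi i h.

Lemma chiw_ext w h : over_alphabet n w -> chiw chi' w h = chiw chi w h.
Proof. by move=> /allP Hw; apply: eq_big_seq => i /Hw /chi'E ->. Qed.

Lemma emul_ext (a b : elt K G) : inGX n a -> emul chi' a b = emul chi a b.
Proof.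
elim: a => [//|s a IH] /= /andP [hs ha]; rewrite /emul /= -!/(emul _ a b) IH //.
by congr (_ ++ _); apply: eq_map => t; rewrite chiw_ext.
Qed.

Lemma bval_ext t : well_lettered n t -> bval n g chi' t = bval n g chi t.
Proof.
elim: t => [//|l IHl r IHr]; rewrite /well_lettered /= all_cat => /andP [hl hr].
rewrite IHl // IHr // /sbracket !emul_ext ?inGX_bval // /pdeg chiw_ext //.
exact: over_alphabet_letters.
Qed.

Lemma in_ideal_ext z : (2 <= n)%N -> in_ideal n g chi' z -> in_ideal n g chi z.
Proof.
move=> hn; elim=> [|z0 a b t _ IH Ha Hb Ht]; first by constructor.
have Hl := well_lettered_rel hn Ht.
have Hat : inGX n (emul chi a (bval n g chi t)) by apply: inGX_emul => //; apply: inGX_bval.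
by rewrite (bval_ext Hl) (emul_ext _ Ha) (emul_ext _ Hat); apply: in_idealS.
Qed.

Lemma Ueq_ext t1 t2 : (2 <= n)%N -> well_lettered n t1 -> well_lettered n t2 ->
  Ueq n g chi' (bval n g chi' t1) (bval n g chi' t2) ->
  Ueq n g chi (bval n g chi t1) (bval n g chi t2).
Proof.
move=> hn H1 H2 [z [Hz E]]; exists z; split; first exact: in_ideal_ext.
by rewrite -(bval_ext H1) -(bval_ext H2).
Qed.

End CharacterExtension.

(* chi^i is only assumed multiplicative for 1 <= i <= n; outside that range it is
   replaced by the trivial character, which does not change G<X>. *)
Definition extend_char (K : fieldType) (G : zmodType) (n : nat) (chi : nat -> G -> K) i h :=
  if (0 < i <= n)%N then chi i h else 1.

Section ExtendChar.
Variables (K : fieldType) (G : zmodType) (n : nat) (chi : nat -> G -> K).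
Hypothesis hchiM :
  forall i, (1 <= i <= n)%N -> forall a b : G, chi i (a + b) = chi i a * chi i b.
Hypothesis hchi0 : forall i, (1 <= i <= n)%N -> forall a : G, chi i a != 0.

Lemma extend_charE i h : (0 < i <= n)%N -> extend_char n chi i h = chi i h.
Proof. by rewrite /extend_char => ->. Qed.

Lemma extend_charM i a b :
  extend_char n chi i (a + b) = extend_char n chi i a * extend_char n chi i b.
Proof. by rewrite /extend_char; case: ifP => hi; [apply: hchiM | rewrite mulr1]. Qed.

Lemma extend_char0 i : extend_char n chi i 0 = 1.
Proof.
rewrite /extend_char; case: ifP => // hi.
by apply: (mulfI (hchi0 hi 0)); rewrite -hchiM // addr0 mulr1.
Qed.

End ExtendChar.

Lemma well_lettered_atoms n k m (T : btree (btree nat)) :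
  (1 <= k <= n)%N -> (2 * n - k < m < 2 * n)%N -> frontier T = atoms n k m ->
  well_lettered n (bjoin T).
Proof.
have leavesE s : flatten [seq frontier t | t <- [seq BLeaf i | i <- s]] = s.
  by elim: s => //= i s ->.
move=> hk hm ET; rewrite /well_lettered frontier_bjoin ET /atoms map_cat flatten_cat.
rewrite leavesE [flatten _]/= cats0 /ym frontier_rcomb all_cat.
apply/andP; split; apply/allP => i.
  by rewrite mem_iota => hi; rewrite letter_id; lia.
by rewrite inE mem_iota => hi; rewrite letter_gt; lia.
Qed.

Theorem lemma3p5 (K : fieldType) (G : zmodType) (n : nat)
  (g : nat -> G) (chi : nat -> G -> K) (q : K)
  (hn : (2 <= n)%N)
  (hchiM : forall i, (1 <= i <= n)%N -> forall a b : G, chi i (a + b) = chi i a * chi i b)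
  (hchi0 : forall i, (1 <= i <= n)%N -> forall a : G, chi i a != 0)
  (hq0 : q != 0) (hq3 : q ^+ 3 != 1) (hq1 : q != -1)
  (hpii : forall i, (1 <= i)%N -> (i < n)%N -> pp g chi i i = q)
  (hpnn : pp g chi n n = q ^+ 2)
  (hpi1 : forall i, (1 < i)%N -> (i < n)%N ->
            pp g chi i i.-1 * pp g chi i.-1 i = q^-1)
  (hpn1 : pp g chi n.-1 n * pp g chi n n.-1 = q ^- 2)
  (hpij : forall i j, (1 <= i)%N -> (i.+1 < j)%N -> (j <= n)%N ->
            pp g chi i j * pp g chi j i = 1)
  (k m : nat) (hk : (1 <= k)%N) (hkn : (k <= n)%N)
  (hm1 : (2 * n - k < m)%N) (hm2 : (m < 2 * n)%N)
  (T1 T2 : btree (btree nat))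
  (hT1 : frontier T1 = atoms n k m) (hT2 : frontier T2 = atoms n k m) :
  Ueq n g chi (bval n g chi (bjoin T1)) (bval n g chi (bjoin T2)).
Proof.
have hk' : (1 <= k <= n)%N by rewrite hk.
have hm : (2 * n - k < m < 2 * n)%N by rewrite hm1.
have L1 := well_lettered_atoms hk' hm hT1; have L2 := well_lettered_atoms hk' hm hT2.
set chi' := extend_char n chi.
have ppE i j : (0 < i <= n)%N -> pp g chi' i j = pp g chi i j.
  by move=> hi; rewrite /pp /chi' extend_charE.
apply: (Ueq_ext (chi' := chi') (@extend_charE _ _ n chi) hn L1 L2).
have chi'M := extend_charM hchiM.
apply: (Ueq_of_ueq chi'M (extend_char0 hchiM hchi0) hn); rewrite ?inGX_bval //.
apply: (bval_atoms_ueq chi'M hq0 hq1 _ _ _ hk' hm hT1 hT2).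
- by move=> i h1 h2; rewrite ppE ?hpii //; lia.
- by move=> i h1 h2; rewrite !ppE ?hpi1 //; lia.
- by move=> i j h1 h2 h3; rewrite !ppE ?hpij //; lia.
Qed.
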